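(* Let $\langle-,-\rangle$ be a cyclic form on $C$. Then: (1) $\langle e,\mu(v_1,\dots,v_n)\rangle=0$ for $n\le m-1$; (2) $\langle\mu(v_1,\dots,v_n),\mu(w_1,\dots,w_l)\rangle=0$ for $l\le m-1$ whenever each $v_i\in\mathrm{Span}\{w_1,\dots,w_l\}$.
   Context: $k$ is a field of characteristic zero, $V$ a $k$-vector space of dimension $m\ge1$ in degree $0$, $A=\mathrm{Sym}(V)$, and $C=A^{\textup{!`}}$ its Koszul dual coalgebra, the exterior coalgebra on $sV$ with elements $\mu(v_1,\dots,v_n)=sv_1\wedge\cdots\wedge sv_n$ (in all statements the $v_i$, resp. $w_j$, are taken linearly independent), counit/coaugmentation element $e$ (the empty wedge), and coproduct $\triangle\mu(v_1,\dots,v_n)=\sum_{p=0}^n\sum_{\sigma\in Sh_{p,n-p}}\mathrm{sgn}(\sigma)\,\mu(v_{\sigma(1)},\dots,v_{\sigma(p)})\otimes\mu(v_{\sigma(p+1)},\dots,v_{\sigma(n)})$ over $(p,n-p)$-shuffles. A symmetric bilinear form of degree $-d$ on $C$ is $\langle-,-\rangle:C\otimes C\to k[d]$ with $\langle a,b\rangle=(-1)^{|a||b|}\langle b,a\rangle$; it is cyclic if $\sum\langle a,b^2\rangle b^1=\sum\langle a^1,b\rangle a^2$ for all $a,b\in C$, where $\triangle(a)=\sum a^1\otimes a^2$, $\triangle(b)=\sum b^1\otimes b^2$. *)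

From HB Require Import structures.
From mathcomp Require Import all_boot all_order all_algebra.
Set Implicit Arguments. Unset Strict Implicit. Unset Printing Implicit Defensive.
Import Order.TTheory GRing.Theory Num.Theory.
Local Open Scope ring_scope.

(* Model: V = 'rV[k]_m (an m-dimensional k-vector space, fixed basis 'I_m).
   C = exterior coalgebra on sV, with basis e_S = s e_{s1} /\ ... /\ s e_{sn}
   for S = {s1 < ... < sn} a subset of 'I_m; e_S has degree #|S|. *)
Section Exterior.
Variables (k : fieldType) (m : nat).

Definition coalg := {ffun {set 'I_m} -> k}.
(* C (x) C, coefficients on e_S (x) e_T *)
Definition coalg2 := {ffun {set 'I_m} * {set 'I_m} -> k}.

Definition ebas (S : {set 'I_m}) : coalg := [ffun T : {set 'I_m} => (T == S)%:R].

Definition eunit : coalg := ebas set0.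

Definition homog (n : nat) (a : coalg) := forall S : {set 'I_m}, #|S| != n -> a S = 0.

(* mu(v_1,...,v_n) = s v_1 /\ ... /\ s v_n, expanded in the basis:
   coefficient of e_S (#|S| = n, S listed increasingly) is the n x n minor
   of the matrix with rows v_i and columns S. *)
Definition mu (n : nat) (v : 'I_n -> 'rV[k]_m) : coalg :=
  [ffun S : {set 'I_m} => if #|S| == n then
       \det (\matrix_(i < n, j < n) nth 0 [seq v i 0 c | c <- enum S] j)
     else 0].

(* sign of the unshuffle putting T in front of U *)
Definition shsign (T U : {set 'I_m}) : k :=
  (-1) ^+ #|[set p : 'I_m * 'I_m | [&& p.1 \in T, p.2 \in U & (p.2 < p.1)%N]]|.

(* coproduct: Delta e_S = sum_{T disjoint U, T :|: U = S} shsign T U e_T (x) e_U,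
   extended linearly *)
Definition cop (a : coalg) : coalg2 :=
  [ffun TU : {set 'I_m} * {set 'I_m} => if [disjoint TU.1 & TU.2] then shsign TU.1 TU.2 * a (TU.1 :|: TU.2)
              else 0].

Definition gram := {ffun {set 'I_m} * {set 'I_m} -> k}.
Definition bform (B : gram) (a b : coalg) : k :=
  \sum_(S : {set 'I_m}) \sum_(T : {set 'I_m}) a S * b T * B (S, T).

(* symmetric bilinear form of degree -d (we grade C by |e_S| = #|S|;
   the opposite convention |e_S| = -#|S| just replaces d by -d) *)
Definition symmetric_form_deg (B : gram) (d : int) :=
  (forall (p q : nat) a b, homog p a -> homog q b ->
     bform B a b = (-1) ^+ (p * q) * bform B b a) /\
  (forall (p q : nat) a b, homog p a -> homog q b -> (p + q)%:Z != d ->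
     bform B a b = 0).

(* sum <a, b^2> b^1 *)
Definition cyc_lhs (B : gram) (a b : coalg) : coalg :=
  [ffun S : {set 'I_m} => \sum_(U : {set 'I_m}) cop b (S, U) * bform B a (ebas U)].
(* sum <a^1, b> a^2 *)
Definition cyc_rhs (B : gram) (a b : coalg) : coalg :=
  [ffun U : {set 'I_m} => \sum_(T : {set 'I_m}) cop a (T, U) * bform B (ebas T) b].

Definition cyclic_form (B : gram) := forall a b, cyc_lhs B a b = cyc_rhs B a b.

End Exterior.

From HB Require Import structures.
From mathcomp Require Import all_boot all_order all_algebra.
From mathcomp Require Import zify.
Set Implicit Arguments. Unset Strict Implicit. Unset Printing Implicit Defensive.
Import Order.TTheory GRing.Theory Num.Theory.
Local Open Scope ring_scope.

(* Since l < m there is a linear form f vanishing on Span{w_j} with f(u) = 1 for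
   some vector u.  Contraction with f, a |-> sum f(a^1) a^2 over the degree-one
   left factors a^1, is computed on mu(x_1,...,x_p) by Laplace expansion along
   the first column: it kills mu(v_1,...,v_n), as f vanishes on every v_i, and
   sends mu(u,w_1,...,w_l) to mu(w_1,...,w_l).  Cyclicity moves the contraction
   across the form, <a, f.b> = sum_T +-(f.a)_T <e_T, b>, so
   <mu(v), mu(w)> = <mu(v), f.mu(u,w)> = 0.  Part (1) is the case of the empty
   family, since e = mu(). *)

Lemma enum_setE m (S : {set 'I_m}) : enum S = [seq j <- enum 'I_m | j \in S].
Proof. by rewrite {1}/enum_mem -enumT. Qed.

Lemma count_enum_ord m (P : pred 'I_m) : count P (enum 'I_m) = #|[set u | P u]|.
Proof. by rewrite cardE enum_setE size_filter; apply: eq_count => u; rewrite inE. Qed.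

Section Minors.
Variables (R : comRingType) (m : nat).

Definition minor N M (x : 'I_N -> 'rV[R]_m) (s : seq 'I_m) : 'M[R]_(N, M) :=
  \matrix_(r, c) nth 0 [seq x r 0 j | j <- s] c.
#[global] Arguments minor {N M} x s.

Lemma det_minor_swap N (x : 'I_N -> 'rV[R]_m) (a b : 'I_m) (pre post : seq 'I_m) :
  ((size pre).+1 < N)%N ->
  \det (minor x (pre ++ b :: a :: post)) = - \det (minor x (pre ++ a :: b :: post)).
Proof.
move=> lt_pre; have lt_pre' := ltnW lt_pre.
pose j1 := Ordinal lt_pre'; pose j2 := Ordinal lt_pre.
have -> : minor x (pre ++ b :: a :: post) =
          col_perm (perm.tperm j1 j2) (minor x (pre ++ a :: b :: post)).
  apply/matrixP => r c; rewrite !mxE !map_cat !nth_cat !size_map.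
  case: perm.tpermP => [->|->|/eqP c_j1 /eqP c_j2] /=.
  - by rewrite ltnn subnn ltnNge leqnSn subSnn.
  - by rewrite ltnn ltnNge leqnSn subSnn subnn.
  - case: ltnP => // le_pre_c.
    have c_j1' : (c : nat) != size pre := c_j1.
    have c_j2' : (c : nat) != (size pre).+1 := c_j2.
    by case E: (c - size pre)%N => [|[|t]] //=; exfalso; lia.
rewrite col_permE det_mulmx det_perm perm.tpermV perm.odd_tperm.
by rewrite -val_eqE /= neq_ltn ltnSn expr1 mulrN1.
Qed.

Lemma det_minor_insert N (x : 'I_N -> 'rV[R]_m) (U : {set 'I_m}) (i : 'I_m)
    (L pre : seq 'I_m) :
  sorted (fun a b : 'I_m => (a < b)%N) L -> i \in L -> i \notin U ->
  (size pre + count [in i |: U] L = N)%N ->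
  \det (minor x (pre ++ [seq j <- L | j \in i |: U])) =
  (-1) ^+ count (fun u : 'I_m => (u \in U) && (u < i)%N) L *
    \det (minor x (pre ++ i :: [seq j <- L | j \in U])).
Proof.
elim: L pre => [//|a L IH] pre sorted_aL iL iU sizeN.
have a_lt : all (fun b : 'I_m => (a < b)%N) L.
  by apply: (order_path_min _ sorted_aL) => y y0 z; apply: ltn_trans.
have sorted_L := path_sorted sorted_aL.
have [eq_ai|a_neq_i] := eqVneq a i.
  subst i; rewrite /= !inE eqxx ltnn (negbTE iU) /=.
  have -> : [seq j <- L | j \in a |: U] = [seq j <- L | j \in U].
    apply: eq_in_filter => j jL; rewrite !inE.
    by have := allP a_lt j jL; case: eqP => // ->; rewrite ltnn.
  have -> : count (fun u : 'I_m => (u \in U) && (u < a)%N) L = 0%N.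
    apply/eqP; rewrite -leqn0 leqNgt -has_count; apply/hasP => -[j jL /andP[_ lt_ja]].
    by have := ltn_trans (allP a_lt j jL) lt_ja; rewrite ltnn.
  by rewrite mul1r.
have iL' : i \in L by move: iL; rewrite inE eq_sym (negbTE a_neq_i).
have lt_ai : (a < i)%N := allP a_lt i iL'.
have count_pos : (0 < count [in i |: U] L)%N.
  by rewrite -has_count; apply/hasP; exists i; rewrite // !inE eqxx.
move: sizeN; rewrite /= !inE (negbTE a_neq_i) /=.
have [aU|aU] := boolP (a \in U); last by rewrite add0n; apply: IH.
rewrite lt_ai addnS -addSn => sizeN.
rewrite -cat_rcons IH ?size_rcons // cat_rcons det_minor_swap; last first.
  by rewrite -sizeN -addn1 leq_add2l.
by rewrite exprS mulN1r mulNr mulrN.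
Qed.

Lemma det_minor_cons N (x : 'I_N.+1 -> 'rV[R]_m) (i : 'I_m) (s : seq 'I_m) :
  \det (minor x (i :: s)) = \sum_r x r 0 i * ((-1) ^+ r * \det (row' r (minor x s))).
Proof.
rewrite (expand_det_col _ ord0); apply: eq_bigr => r _.
rewrite /cofactor addn0 mxE; congr (_ * (_ * \det _)).
by apply/matrixP => a b; rewrite !mxE.
Qed.

End Minors.

Section Coproduct.
Variables (k : fieldType) (m : nat).

Lemma mu_minor n (x : 'I_n -> 'rV[k]_m) (S : {set 'I_m}) :
  #|S| = n -> mu x S = \det (minor x (enum S)).
Proof. by move=> cardS; rewrite ffunE cardS eqxx. Qed.

Lemma eunit_mu0 : eunit k m = mu (fun _ : 'I_0 => 0 : 'rV[k]_m).
Proof.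
by apply/ffunP => S; rewrite !ffunE cards_eq0; case: (S == set0); rewrite ?det_mx00.
Qed.

Lemma shsign_set1l (U : {set 'I_m}) (i : 'I_m) :
  shsign k [set i] U = (-1) ^+ #|[set u in U | (u < i)%N]|.
Proof.
rewrite /shsign -[in RHS](card_imset _ (fun a b (eq_ab : (i, a) = (i, b)) => congr1 snd eq_ab)).
congr (_ ^+ _); apply: eq_card => -[a b]; rewrite !inE /=.
apply/idP/imsetP => [/and3P[/eqP -> bU lt_ba]|[u]]; first by exists b; rewrite // !inE bU.
by rewrite !inE => /andP[uU lt_ui] [-> ->]; rewrite eqxx uU.
Qed.

Lemma shsign_set1r (U : {set 'I_m}) (i : 'I_m) :
  shsign k U [set i] = (-1) ^+ #|[set u in U | (i < u)%N]|.
Proof.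
rewrite /shsign -[in RHS](card_imset _ (fun a b (eq_ab : (a, i) = (b, i)) => congr1 fst eq_ab)).
congr (_ ^+ _); apply: eq_card => -[a b]; rewrite !inE /=.
apply/idP/imsetP => [/and3P[aU /eqP -> lt_ia]|[u]]; first by exists a; rewrite // !inE aU.
by rewrite !inE => /andP[uU lt_iu] [-> ->]; rewrite eqxx uU.
Qed.

Lemma card_lt_gt (U : {set 'I_m}) (i : 'I_m) : i \notin U ->
  (#|[set u in U | (u < i)%N]| + #|[set u in U | (i < u)%N]|)%N = #|U|.
Proof.
move=> iU; rewrite -(cardsID [set u : 'I_m | (u < i)%N] U).
congr (_ + _)%N; apply: eq_card => u; rewrite !inE //.
have [uU|] := boolP (u \in U); last by rewrite andbF.
have : (u : nat) != i by apply: contraNneq iU => /val_inj <-.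
by rewrite /=; lia.
Qed.

Lemma cop_set1C (a : coalg k m) (T : {set 'I_m}) (i : 'I_m) :
  cop a (T, [set i]) = (-1) ^+ #|T| * cop a ([set i], T).
Proof.
rewrite !ffunE /= disjoint_sym disjoints1 setUC.
case: ifP => iT; last by rewrite mulr0.
by rewrite shsign_set1r shsign_set1l -(card_lt_gt iT) exprD -mulrA mulrCA signrMK.
Qed.

Lemma mu_setU1 p (x : 'I_p.+1 -> 'rV[k]_m) (U : {set 'I_m}) (i : 'I_m) :
  i \notin U -> #|U| = p ->
  mu x (i |: U) = shsign k [set i] U * \det (minor x (i :: enum U)).
Proof.
move=> iU cardU.
have card_iU : #|i |: U| = p.+1 by rewrite cardsU1 iU cardU.
rewrite mu_minor // enum_setE (@det_minor_insert _ _ _ x U i _ [::]) //.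
- by rewrite shsign_set1l count_enum_ord -enum_setE.
- by have := iota_ltn_sorted 0 m; rewrite -val_enum_ord sorted_map.
- by rewrite mem_enum.
- by rewrite add0n -size_filter -enum_setE -cardE.
Qed.

Lemma cop_mu_set1 p (x : 'I_p.+1 -> 'rV[k]_m) (U : {set 'I_m}) (i : 'I_m) :
  #|U| = p -> cop (mu x) ([set i], U) = \det (minor x (i :: enum U)).
Proof.
move=> cardU; rewrite ffunE /= disjoints1.
have [iU|iU] := boolP (i \in U); last by rewrite mu_setU1 // signrMK.
have lt_idx : ((index i (enum U)).+1 < p.+1)%N by rewrite ltnS -cardU cardE index_mem mem_enum.
rewrite -det_tr (determinant_alternate (i1 := ord0) (i2 := Ordinal lt_idx)) //.
by move=> j; rewrite !mxE /= (nth_map i) ?nth_index ?index_mem ?mem_enum.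
Qed.

Lemma cop_mu_set1_eq0 n (x : 'I_n -> 'rV[k]_m) (U : {set 'I_m}) (i : 'I_m) :
  #|U|.+1 != n -> cop (mu x) ([set i], U) = 0.
Proof.
move=> cardU; rewrite !ffunE /= disjoints1; case: ifP => // iU.
by rewrite cardsU1 iU add1n (negbTE cardU) mulr0.
Qed.

End Coproduct.

Section Contraction.
Variables (k : fieldType) (m : nat).

(* The interior product by the linear form f, i.e. (f (x) id) o Delta. *)
Definition contract (f : 'cV[k]_m) (a : coalg k m) : coalg k m :=
  [ffun T => \sum_i f i 0 * cop a ([set i], T)].

Definition vcons l (u : 'rV[k]_m) (w : 'I_l -> 'rV[k]_m) (r : 'I_l.+1) : 'rV[k]_m :=
  if unlift ord0 r is Some j then w j else u.

Lemma contract_mu p (x : 'I_p.+1 -> 'rV[k]_m) (f : 'cV[k]_m) (U : {set 'I_m}) :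
  #|U| = p -> contract f (mu x) U =
  \sum_r (x r *m f) 0 0 * ((-1) ^+ r * \det (row' r (minor x (enum U)))).
Proof.
move=> cardU; rewrite ffunE.
under eq_bigr => i _ do rewrite cop_mu_set1 // det_minor_cons mulr_sumr.
rewrite exchange_big; apply: eq_bigr => r _; rewrite mxE mulr_suml.
by apply: eq_bigr => i _; rewrite mulrCA mulrA.
Qed.

Lemma contract_mu_eq0 n (x : 'I_n -> 'rV[k]_m) (f : 'cV[k]_m) (U : {set 'I_m}) :
  (forall r, x r *m f = 0) -> contract f (mu x) U = 0.
Proof.
move=> xf0; case: n x xf0 => [|p] x xf0.
  by rewrite ffunE big1 // => i _; rewrite cop_mu_set1_eq0 ?mulr0.
have [cardU|cardU] := eqVneq #|U| p.
  by rewrite contract_mu // big1 // => r _; rewrite xf0 mxE mul0r.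
by rewrite ffunE big1 // => i _; rewrite cop_mu_set1_eq0 ?mulr0.
Qed.

Lemma contract_mu_vcons l (u : 'rV[k]_m) (w : 'I_l -> 'rV[k]_m) (f : 'cV[k]_m)
    (U : {set 'I_m}) :
  (u *m f) 0 0 = 1 -> (forall j, w j *m f = 0) ->
  contract f (mu (vcons u w)) U = mu w U.
Proof.
move=> uf1 wf0; have [cardU|cardU] := eqVneq #|U| l; last first.
  rewrite [RHS]ffunE (negbTE cardU) ffunE big1 // => i _.
  by rewrite cop_mu_set1_eq0 ?mulr0.
rewrite contract_mu // (bigD1 ord0) //= big1 => [|r r_neq0]; last first.
  by case: (unliftP ord0 r) r_neq0 => [j ->|->]; rewrite ?eqxx // /vcons liftK wf0 mxE mul0r.
rewrite /vcons unlift_none uf1 mul1r expr0 mul1r addr0 mu_minor //.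
by congr (\det _); apply/matrixP => a b; rewrite !mxE liftK.
Qed.

Lemma bform_ebasr (B : gram k m) (a : coalg k m) (U : {set 'I_m}) :
  bform B a (ebas k U) = \sum_S a S * B (S, U).
Proof.
apply: eq_bigr => S _; rewrite (bigD1 U) //= big1 => [|T /negbTE neq_TU].
  by rewrite ffunE eqxx mulr1 addr0.
by rewrite ffunE neq_TU mulr0 mul0r.
Qed.

Lemma bform_sumr (B : gram k m) (a b : coalg k m) :
  bform B a b = \sum_U b U * bform B a (ebas k U).
Proof.
under [RHS]eq_bigr => U _ do rewrite bform_ebasr mulr_sumr.
rewrite exchange_big; apply: eq_bigr => S _; apply: eq_bigr => T _.
by rewrite mulrCA mulrA.
Qed.

Lemma cyclic_bform_contract (B : gram k m) (f : 'cV[k]_m) (a b : coalg k m) :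
  cyclic_form B ->
  bform B a (contract f b) =
  \sum_(T : {set 'I_m}) (-1) ^+ #|T| * contract f a T * bform B (ebas k T) b.
Proof.
move=> cycB.
transitivity (\sum_i f i 0 * cyc_lhs B a b [set i]).
  rewrite bform_sumr; under eq_bigr => U _ do rewrite ffunE mulr_suml.
  rewrite exchange_big; apply: eq_bigr => i _; rewrite ffunE mulr_sumr.
  by apply: eq_bigr => U _; rewrite mulrA.
under eq_bigr => i _ do rewrite cycB ffunE mulr_sumr.
rewrite exchange_big; apply: eq_bigr => T _; move: (bform _ _ _) => c.
rewrite ffunE mulr_sumr mulr_suml.
by apply: eq_bigr => i _; rewrite cop_set1C !mulrA (mulrC (f i 0)).
Qed.

End Contraction.

Section Functionals.
Variables (k : fieldType) (m : nat).

Lemma exists_annihilator l (W : 'M[k]_(l, m)) :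
  (l < m)%N -> exists2 f : 'cV[k]_m, W *m f = 0 & f != 0.
Proof.
move=> lt_lm; set K := cokermx W.
have K_neq0 : K != 0.
  rewrite -mxrank_eq0 mxrank_coker -lt0n subn_gt0.
  exact: leq_ltn_trans (rank_leq_row W) lt_lm.
have [j colj_neq0] : exists j, col j K != 0.
  apply/existsP; apply: contraNT K_neq0 => /existsPn col_eq0.
  apply/eqP/matrixP => i j; have /eqP/colP/(_ i) := negbNE (col_eq0 j).
  by rewrite !mxE.
by exists (col j K); rewrite // colEsub mulmx_colsub mulmx_coker; apply/matrixP => a b; rewrite !mxE.
Qed.

Lemma exists_dual_unit (f : 'cV[k]_m) : f != 0 -> exists u : 'rV[k]_m, (u *m f) 0 0 = 1.
Proof.
move=> f_neq0; have [i fi_neq0] : exists i, f i 0 != 0.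
  apply/existsP; apply: contraNT f_neq0 => /existsPn f_eq0.
  by apply/eqP/matrixP => i j; rewrite ord1 mxE; apply/eqP/negbNE.
by exists ((f i 0)^-1 *: delta_mx 0 i); rewrite -scalemxAl -rowE !mxE mulVf.
Qed.

End Functionals.

Lemma cyclic_bform_mu_span_eq0 (k : fieldType) (m : nat) (B : gram k m)
    (n l : nat) (v : 'I_n -> 'rV[k]_m) (w : 'I_l -> 'rV[k]_m) :
  cyclic_form B -> (l < m)%N -> (forall i, (v i <= \matrix_(j < l) w j)%MS) ->
  bform B (mu v) (mu w) = 0.
Proof.
move=> cycB lt_lm v_sub; set W := \matrix_(j < l) w j.
have [f Wf0 f_neq0] := exists_annihilator W lt_lm.
have [u uf1] := exists_dual_unit f_neq0.
have wf0 j : w j *m f = 0.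
  have -> : w j = row j W by apply/rowP => c; rewrite !mxE.
  by rewrite -row_mul Wf0 row0.
have vf0 i : v i *m f = 0 by have /submxP[D ->] := v_sub i; rewrite -mulmxA Wf0 mulmx0.
have -> : mu w = contract f (mu (vcons u w)).
  by apply/ffunP => U; rewrite contract_mu_vcons.
rewrite cyclic_bform_contract // big1 // => T _.
by rewrite contract_mu_eq0 // mulr0 mul0r.
Qed.

Theorem proposition9p1 (k : fieldType) (Hk : [pchar k] =i pred0)
    (m : nat) (Hm : (1 <= m)%N) (d : int) (B : gram k m)
    (Hsym : symmetric_form_deg B d) (Hcyc : cyclic_form B) :
  (forall (n : nat) (v : 'I_n -> 'rV[k]_m),
      (n <= m.-1)%N -> row_free (\matrix_(i < n) v i) ->
      bform B (eunit k m) (mu v) = 0) /\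
  (forall (n l : nat) (v : 'I_n -> 'rV[k]_m) (w : 'I_l -> 'rV[k]_m),
      (l <= m.-1)%N ->
      row_free (\matrix_(i < n) v i) -> row_free (\matrix_(j < l) w j) ->
      (forall i, (v i <= \matrix_(j < l) w j)%MS) ->
      bform B (mu v) (mu w) = 0).
Proof.
have lt_m l : (l <= m.-1)%N -> (l < m)%N by rewrite -ltnS prednK.
split=> [n v le_n _ | n l v w le_l _ _ v_sub]; last first.
  exact: cyclic_bform_mu_span_eq0 Hcyc (lt_m _ le_l) v_sub.
by rewrite eunit_mu0; apply: cyclic_bform_mu_span_eq0 => //; [exact: lt_m | case].
Qed.
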